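(* Consider the P-SSD algorithm described in the context, executed over a time-invariant digraph $G$ (i.e., $G_k=G$ for all $k$). Then for any $l\in\mathbb{N}$: $\mathrm{flag}_l^i=1$ for every $i\in\{1,\dots,M\}$ if and only if $C_k^i=C_{l-1}^i$ and $\mathrm{flag}_k^i=1$ for every $i\in\{1,\dots,M\}$ and every $k\ge l$.
   Context: Data setting: a map $T:\mathcal{M}\to\mathcal{M}$, $\mathcal{M}\subseteq\mathbb{R}^n$; a dictionary $D(x)=[d_1(x),\dots,d_{N_d}(x)]$ of real-valued functions on $\mathcal{M}$; data matrices $X,Y\in\mathbb{R}^{N\times n}$ whose $i$-th rows $x_i^T,y_i^T$ satisfy $y_i=T(x_i)$; $D(X)\in\mathbb{R}^{N\times N_d}$ is the matrix with rows $D(x_1),\dots,D(x_N)$ (similarly $D(Y)$). Assumption: $D(X)$ and $D(Y)$ have full column rank. There are $M$ agents; agent $i$ holds local dictionary snapshots $D(X_i),D(Y_i)$ (obtained from a subset of the snapshot pairs) such that the union over $i$ of the rows of $[D(X_i),D(Y_i)]$ equals the set of rows of $[D(X),D(Y)]$. There are signature matrices $D(X_s),D(Y_s)$ with full column rank such that the rows of $[D(X_s),D(Y_s)]$ are contained in the rows of $[D(X_i),D(Y_i)]$ for every $i$. SSD algorithm: given $A,B\in\mathbb{R}^{m\times q}$, set $A_1=A$, $B_1=B$, $C=I_q$, and iterate: let $[Z^A_j;Z^B_j]$ be a matrix whose columns form a basis of the null space of $[A_j,B_j]$ (with $Z^A_j$ having as many rows as $A_j$ has columns); if the null space is trivial return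 $0$; if the number of rows of $Z^A_j$ is at most its number of columns, return $C$; otherwise set $C\leftarrow CZ^A_j$, $A_{j+1}=A_jZ^A_j$, $B_{j+1}=B_jZ^A_j$. Its output is denoted $\mathrm{SSD}(A,B)$. P-SSD algorithm: at iteration $k\ge1$ the digraph $G_k$ is used; an edge $(j,i)\in E_k$ means $j$ is an in-neighbor of $i$, and $\mathcal{N}_{\mathrm{in}}^k(i)$ denotes the in-neighbors of $i$ in $G_k$. Each agent $i$ sets $C_0^i=I_{N_d}$, $\mathrm{flag}_0^i=0$, and for $k=1,2,\dots$: receives $C_{k-1}^j$ for $j\in\mathcal{N}_{\mathrm{in}}^k(i)$; sets $D_k^i=\mathrm{basis}\big(\bigcap_{j\in\{i\}\cup\mathcal{N}_{\mathrm{in}}^k(i)}\mathcal{R}(C_{k-1}^j)\big)$; sets $E_k^i=\mathrm{SSD}(D(X_i)D_k^i,D(Y_i)D_k^i)$; if the number of columns of $D_k^iE_k^i$ is strictly less than that of $C_{k-1}^i$, sets $C_k^i=D_k^iE_k^i$ and $\mathrm{flag}_k^i=0$; otherwise sets $C_k^i=C_{k-1}^i$ and $\mathrm{flag}_k^i=1$; then transmits $C_k^i$ to its out-neighbors. Here $\mathrm{basis}(\mathcal{A})$ returns a matrix whose columns form a basis of the subspace $\mathcal{A}$, and returns $0$ if $\mathcal{A}=\{0\}$; the matrix $0$ is regarded as having $0$ columns. $\mathcal{R}(\cdot)$ denotes range space. *)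

From HB Require Import structures.
From mathcomp Require Import all_boot all_order all_algebra.
From mathcomp Require Import reals.
Set Implicit Arguments. Unset Strict Implicit. Unset Printing Implicit Defensive.
Import Order.TTheory GRing.Theory Num.Theory.
Local Open Scope ring_scope.

(* A real matrix with [n] rows and a variable number of columns.
   A matrix with 0 columns plays the role of the paper's "0" matrix. *)
Definition cmx (R : Type) (n : nat) := {c : nat & 'M[R]_(n, c)}.
Definition ncols (R : Type) (n : nat) (x : cmx R n) : nat := projT1 x.
Definition cval (R : Type) (n : nat) (x : cmx R n) : 'M[R]_(n, ncols x) := projT2 x.

(* Oracle returning a matrix whose columns form a basis of the null space of
   a given matrix (used inside SSD). *)
Definition nullbasis_fun (R : Type) := forall m p : nat, 'M[R]_(m, p) -> cmx R p.
Definition is_nullbasis_fun (R : fieldType) (NB : nullbasis_fun R) : Prop :=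
  forall (m p : nat) (A : 'M[R]_(m, p)),
    row_free (cval (NB m p A))^T && ((cval (NB m p A))^T == kermx A^T)%MS.

(* Oracle basis(.) : given a subspace of R^Nd (represented, as in mxalgebra,
   by the row space of a square matrix), a matrix whose columns form a basis
   of it; for the zero subspace this is necessarily the 0-column matrix. *)
Definition basis_fun (R : Type) (n : nat) := 'M[R]_n -> cmx R n.
Definition is_basis_fun (R : fieldType) (n : nat) (BF : basis_fun R n) : Prop :=
  forall S : 'M[R]_n, row_free (cval (BF S))^T && ((cval (BF S))^T == S)%MS.

Fixpoint ssd_iter (R : fieldType) (NB : nullbasis_fun R) (m q : nat)
    (fuel : nat) (qj : nat) (C : 'M[R]_(q, qj)) (Aj Bj : 'M[R]_(m, qj))
    : cmx R q :=
  match fuel with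
  | 0 => existT _ qj C (* unreachable: q+1 rounds always suffice *)
  | fuel'.+1 =>
      match NB m (qj + qj) (row_mx Aj Bj) with
      | existT c Z =>
          if c == 0%N then existT _ 0%N (0 : 'M[R]_(q, 0))
          else if (qj <= c)%N then existT _ qj C
          else let ZA := usubmx (m1 := qj) (m2 := qj) Z in
               ssd_iter NB fuel' (C *m ZA) (Aj *m ZA) (Bj *m ZA)
      end
  end.

(* SSD(A,B): start from A_1 = A, B_1 = B, C = I_q.  The number of columns
   strictly decreases at each non-terminating round, so q+1 rounds suffice. *)
Definition SSD (R : fieldType) (NB : nullbasis_fun R) (m q : nat)
    (A B : 'M[R]_(m, q)) : cmx R q :=
  ssd_iter NB q.+1 (1%:M : 'M[R]_q) A B.

(* One P-SSD iteration for agent i, given the in-neighbour relation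
   [adj j i] (edge (j,i)) of the current digraph and the previous matrices
   C_{k-1}^j of all agents.  Returns (C_k^i, flag_k^i). *)
Definition pssd_step (R : fieldType) (Nd M : nat) (Ni : 'I_M -> nat)
    (DXl DYl : forall i : 'I_M, 'M[R]_(Ni i, Nd))
    (BF : basis_fun R Nd) (NB : nullbasis_fun R)
    (adj : rel 'I_M) (Cprev : 'I_M -> cmx R Nd) (i : 'I_M) : cmx R Nd * nat :=
  let S := (\bigcap_(j | (j == i) || adj j i) <<(cval (Cprev j))^T>>)%MS in
  match BF S with
  | existT d D =>
      match SSD NB (DXl i *m D) (DYl i *m D) with
      | existT e E =>
          if (e < ncols (Cprev i))%N then (existT _ e (D *m E), 0%N)
          else (Cprev i, 1%N)
      end
  end.

Fixpoint pssd_C (R : fieldType) (Nd M : nat) (Ni : 'I_M -> nat)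
    (DXl DYl : forall i : 'I_M, 'M[R]_(Ni i, Nd))
    (BF : basis_fun R Nd) (NB : nullbasis_fun R)
    (G : nat -> rel 'I_M) (k : nat) : 'I_M -> cmx R Nd :=
  match k with
  | 0 => fun _ => existT _ Nd (1%:M : 'M[R]_Nd)
  | k'.+1 => fun i => (pssd_step DXl DYl BF NB (G k) (pssd_C DXl DYl BF NB G k') i).1
  end.

Definition pssd_flag (R : fieldType) (Nd M : nat) (Ni : 'I_M -> nat)
    (DXl DYl : forall i : 'I_M, 'M[R]_(Ni i, Nd))
    (BF : basis_fun R Nd) (NB : nullbasis_fun R)
    (G : nat -> rel 'I_M) (k : nat) (i : 'I_M) : nat :=
  match k with
  | 0 => 0%N
  | k'.+1 => (pssd_step DXl DYl BF NB (G k) (pssd_C DXl DYl BF NB G k') i).2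
  end.

Definition dict_mx (R : Type) (n Nd N : nat) (dict : 'rV[R]_n -> 'rV[R]_Nd)
    (X : 'M[R]_(N, n)) : 'M[R]_(N, Nd) :=
  \matrix_(r < N) dict (row r X).

From HB Require Import structures.
From mathcomp Require Import all_boot all_order all_algebra.
From mathcomp Require Import reals.
From Stdlib Require Import FunctionalExtensionality.
Set Implicit Arguments. Unset Strict Implicit. Unset Printing Implicit Defensive.
Import Order.TTheory GRing.Theory Num.Theory.
Local Open Scope ring_scope.

(* Over a time-invariant digraph, P-SSD iterates one fixed map on the family
   (C^i)_i.  A flag equal to 1 means that agent i kept its matrix, so if every
   flag is 1 at step l, the family C_{l-1} is a fixed point of that map; the
   iteration then stays there forever, and every later step, being the same
   computation on the same input, raises all flags again. *)

Section PSSDTimeInvariant.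

Variables (R : fieldType) (Nd M : nat) (Ni : 'I_M -> nat).
Variables (DXl DYl : forall i : 'I_M, 'M[R]_(Ni i, Nd)).
Variables (BF : basis_fun R Nd) (NB : nullbasis_fun R).

Definition pssd_update (adj : rel 'I_M) (C : 'I_M -> cmx R Nd) :
    'I_M -> cmx R Nd :=
  fun i => (pssd_step DXl DYl BF NB adj C i).1.

Lemma pssd_step_flag1 adj C i :
  (pssd_step DXl DYl BF NB adj C i).2 = 1%N ->
  (pssd_step DXl DYl BF NB adj C i).1 = C i.
Proof.
rewrite /pssd_step; case: (BF _) => d D; case: (SSD _ _ _) => e E.
by case: ifP.
Qed.

Lemma pssd_update_fixed adj C :
  (forall i, (pssd_step DXl DYl BF NB adj C i).2 = 1%N) ->
  pssd_update adj C = C.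
Proof.
by move=> flag1; apply: functional_extensionality => i; apply: pssd_step_flag1.
Qed.

Variable G : rel 'I_M.

Local Notation C := (pssd_C DXl DYl BF NB (fun _ => G)).
Local Notation flag := (pssd_flag DXl DYl BF NB (fun _ => G)).

Lemma pssd_C_iter k : C k = iter k (pssd_update G) (C 0).
Proof. by elim: k => [|k IHk] //=; rewrite -IHk. Qed.

Lemma pssd_flagS k i : flag k.+1 i = (pssd_step DXl DYl BF NB G (C k) i).2.
Proof. by []. Qed.

Lemma pssd_C_stationary l :
  pssd_update G (C l) = C l -> forall k, (l <= k)%N -> C k = C l.
Proof.
move=> fixCl k /subnKC <-.
by rewrite addnC pssd_C_iter iterD -pssd_C_iter iter_fix.
Qed.

End PSSDTimeInvariant.

Theorem proposition4p3 (R : realType) (n Nd N M : nat)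
  (Mdom : 'rV[R]_n -> Prop) (T : 'rV[R]_n -> 'rV[R]_n)
  (hT : forall x, Mdom x -> Mdom (T x))
  (dict : 'rV[R]_n -> 'rV[R]_Nd)
  (X Y : 'M[R]_(N, n))
  (hXM : forall r : 'I_N, Mdom (row r X))
  (hXY : forall r : 'I_N, row r Y = T (row r X))
  (hrankX : \rank (dict_mx dict X) = Nd)
  (hrankY : \rank (dict_mx dict Y) = Nd)
  (Ni : 'I_M -> nat) (DXl DYl : forall i : 'I_M, 'M[R]_(Ni i, Nd))
  (hloc_sub : forall (i : 'I_M) (r : 'I_(Ni i)), exists r' : 'I_N,
      row r (row_mx (DXl i) (DYl i))
      = row r' (row_mx (dict_mx dict X) (dict_mx dict Y)))
  (hloc_cover : forall r : 'I_N, exists (i : 'I_M) (r' : 'I_(Ni i)),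
      row r' (row_mx (DXl i) (DYl i))
      = row r (row_mx (dict_mx dict X) (dict_mx dict Y)))
  (Ns : nat) (DXs DYs : 'M[R]_(Ns, Nd))
  (hrankXs : \rank DXs = Nd) (hrankYs : \rank DYs = Nd)
  (hsig : forall (i : 'I_M) (r : 'I_Ns), exists r' : 'I_(Ni i),
      row r (row_mx DXs DYs) = row r' (row_mx (DXl i) (DYl i)))
  (BF : basis_fun R Nd) (hBF : is_basis_fun BF)
  (NB : nullbasis_fun R) (hNB : is_nullbasis_fun NB)
  (G : rel 'I_M) (l : nat) (hl : (0 < l)%N) :
  (forall i : 'I_M, pssd_flag DXl DYl BF NB (fun _ => G) l i = 1%N) <->
  (forall (i : 'I_M) (k : nat), (l <= k)%N ->
      pssd_C DXl DYl BF NB (fun _ => G) k i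
        = pssd_C DXl DYl BF NB (fun _ => G) l.-1 i
      /\ pssd_flag DXl DYl BF NB (fun _ => G) k i = 1%N).
Proof.
case: l hl => [//|l] _ /=.
split=> [flag1 i [//|k] lk | stationary i]; last first.
  by case: (stationary i l.+1 (leqnn _)).
have stay := pssd_C_stationary (pssd_update_fixed flag1).
split; first by rewrite (stay k.+1 (ltnW lk)).
by rewrite pssd_flagS (stay k lk); exact: flag1.
Qed.
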